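(* Let $F_1,\dots,F_J\in\mathbb{Z}^2$ ($J\ge2$) be the vertices of a convex polygonal curve in the following sense: the interiors of the segments $\overline{F_iF_{i+1}}$ are mutually disjoint, and writing $\overrightarrow{F_iF_{i+1}}=L_i(\cos\beta_i,\sin\beta_i)$ for $i=1,\dots,J-1$, we have $L_i>0$ and $\beta_{i+1}>\beta_i$. Suppose $\beta_{J-1}-\beta_1\le2\pi$ and set $L=\sum_{i=1}^{J-1}L_i$. Then $$J\le2+(\beta_{J-1}-\beta_1)^{1/3}L^{2/3}.$$ *)

From HB Require Import structures.
From mathcomp Require Import all_boot all_order all_algebra.
From mathcomp Require Import all_classical all_reals all_analysis.
Set Implicit Arguments. Unset Strict Implicit. Unset Printing Implicit Defensive.
Import Order.TTheory GRing.Theory Num.Theory.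
Local Open Scope ring_scope.
Local Open Scope classical_set_scope.

Definition ptR (R : realType) (p : int * int) : R * R := (p.1%:~R, p.2%:~R).

Definition open_seg (R : realType) (P Q : R * R) : set (R * R) :=
  [set X | exists t : R, 0 < t < 1 /\
     X = ((1 - t) * P.1 + t * Q.1, (1 - t) * P.2 + t * Q.2)].

From mathcomp Require Import all_boot all_order all_algebra.
From mathcomp Require Import all_classical all_reals all_analysis.
From mathcomp Require Import ring lra.
Set Implicit Arguments. Unset Strict Implicit. Unset Printing Implicit Defensive.
Import Order.TTheory GRing.Theory Num.Theory.
Local Open Scope ring_scope.
Local Open Scope classical_set_scope.

(* Two consecutive edges are nonzero integer vectors, so they have length at
   least 1 and a cross product at least 1; as the cross product is
   [L_i L_(i+1) sin d_i] with [d_i = beta_(i+1) - beta_i], this forces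
   [d_i >= 1 / (L_i L_(i+1))].  Summing over the [J - 2] pairs, the
   inequality [m^3 <= (sum_i 1 / (l_i l_(i+1))) (sum_i l_i)^2] (a discrete
   Hoelder inequality, proved with the tangent line of [s |-> 4 / s^2]) gives
   [(J - 2)^3 <= (beta_(J-1) - beta_1) L^2]. *)

Section Angles.
Variable R : realType.

Lemma sin_le_id (x : R) : 0 < x -> sin x <= x.
Proof.
move=> x_gt0.
have cont : {within `[0, x], continuous (fun y : R => y - sin y)}.
  apply: continuous_subspaceT => y.
  by apply: continuousB; [exact: cvg_id | exact: continuous_sin].
have [c _ mvt] := @MVT R (fun y => y - sin y) (fun y => 1 - cos y) 0 x x_gt0
  (fun y _ => is_deriveB _ _) cont.
move: mvt; rewrite sin0 !subr0 => mvt.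
by rewrite -subr_ge0 mvt mulr_ge0 ?subr_ge0 ?cos_le1 // ltW.
Qed.

Lemma int_polar_length_ge1 (dx dy : int) (l b : R) : 0 < l ->
  dx%:~R = l * cos b -> dy%:~R = l * sin b -> 1 <= l.
Proof.
move=> l_gt0 edx edy.
have norm2 : ((dx * dx + dy * dy)%R%:~R : R) = l ^+ 2.
  rewrite rmorphD !rmorphM /= edx edy.
  transitivity (l ^+ 2 * (cos b ^+ 2 + sin b ^+ 2)); first ring.
  by rewrite cos2Dsin2 mulr1.
have : (0 : R) < (dx * dx + dy * dy)%R%:~R by rewrite norm2 exprn_gt0.
rewrite ltr0z gtz0_ge1 -(ler1z R) norm2.
nra.
Qed.

Lemma int_polar_angle_gap (dx dy dx' dy' : int) (l l' b b' : R) :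
  0 < l -> 0 < l' -> b < b' ->
  dx%:~R = l * cos b -> dy%:~R = l * sin b ->
  dx'%:~R = l' * cos b' -> dy'%:~R = l' * sin b' ->
  1 / (l * l') <= b' - b.
Proof.
move=> l_gt0 l'_gt0 b_lt edx edy edx' edy'.
have l_ge1 := int_polar_length_ge1 l_gt0 edx edy.
have l'_ge1 := int_polar_length_ge1 l'_gt0 edx' edy'.
have ll'_ge1 : 1 <= l * l' by rewrite mulr_ege1.
rewrite ler_pdivrMr ?mulr_gt0 //.
have d_gt0 : 0 < b' - b by rewrite subr_gt0.
have [d_ge1|d_lt1] := lerP 1 (b' - b); first nra.
have sin_gt0 : 0 < sin (b' - b) by apply: sin2_gt0; rewrite d_gt0 /=; lra.
have cross : ((dx * dy' - dy * dx')%R%:~R : R) = l * l' * sin (b' - b).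
  by rewrite rmorphB !rmorphM /= edx edy edx' edy' sinB; ring.
have : (0 : R) < (dx * dy' - dy * dx')%R%:~R by rewrite cross !mulr_gt0.
rewrite ltr0z gtz0_ge1 -(ler1z R) cross.
have := sin_le_id d_gt0; nra.
Qed.

End Angles.

Lemma sumr_nat_gt0 (R : numDomainType) (n : nat) (F : nat -> R) :
  (forall i, (i <= n)%N -> 0 < F i) -> 0 < \sum_(0 <= i < n.+1) F i.
Proof.
move=> F_gt0; have := @ltr_sum_nat R 0 n.+1 (fun=> 0) F isT.
by rewrite big1_eq; apply=> i /andP[_]; rewrite ltnS; exact: F_gt0.
Qed.

Section Hoelder.
Variable R : realFieldType.

(* The tangent line of the convex map [s |-> 4 / s^2] at [s = 2 / c], composed
   with [1 / (x y) >= 4 / (x + y)^2]. *)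
Lemma inv_mul_ge_tangent (x y c : R) : 0 < x -> 0 < y -> 0 < c ->
  3 * c ^+ 2 - (x + y) * c ^+ 3 <= 1 / (x * y).
Proof.
move=> x_gt0 y_gt0 c_gt0.
rewrite ler_pdivlMr ?mulr_gt0 //.
set t := c * (x + y).
have t_gt0 : 0 < t by rewrite mulr_gt0 ?addr_gt0.
have -> : 3 * c ^+ 2 - (x + y) * c ^+ 3 = c ^+ 2 * (3 - t) by rewrite /t; ring.
have [t_ge3|t_lt3] := lerP (3 - t) 0.
  have : 0 <= x * y by rewrite mulr_ge0 // ltW.
  have : c ^+ 2 * (3 - t) <= 0 by rewrite mulr_ge0_le0 // sqr_ge0.
  nra.
have amgm : x * y <= (x + y) ^+ 2 / 4.
  by rewrite ler_pdivlMr //; have := sqr_ge0 (x - y); nra.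
apply: le_trans (_ : c ^+ 2 * (3 - t) * ((x + y) ^+ 2 / 4) <= 1).
  by rewrite ler_wpM2l // mulr_ge0 ?sqr_ge0 // ltW.
have -> : c ^+ 2 * (3 - t) * ((x + y) ^+ 2 / 4) = t ^+ 2 * (3 - t) / 4.
  by rewrite /t; field.
rewrite ler_pdivrMr //.
have t1_ge0 : 0 <= t + 1 by rewrite addr_ge0 // ltW.
have := mulr_ge0 (sqr_ge0 (t - 2)) t1_ge0; nra.
Qed.

Lemma natr_exp3_le_sum_inv_mul (m : nat) (l : nat -> R) :
  (forall i, (i <= m)%N -> 0 < l i) ->
  (m%:R : R) ^+ 3 <=
    (\sum_(0 <= i < m) 1 / (l i * l i.+1)) * (\sum_(0 <= i < m.+1) l i) ^+ 2.
Proof.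
case: m => [|m] l_gt0; first by rewrite expr0n /= big_geq // mul0r.
set S := \sum_(0 <= i < m.+2) l i.
have S_gt0 : 0 < S := sumr_nat_gt0 l_gt0.
(* The tangent point [c = m / S] makes the lower bound [3 c^2 m - 2 S c^3] exact. *)
set c := (m.+1%:R : R) / S.
have c_gt0 : 0 < c by rewrite divr_gt0.
have cS : c * S = m.+1%:R by rewrite /c divfK // gt_eqF.
have pairs : \sum_(0 <= i < m.+1) l i + \sum_(0 <= i < m.+1) l i.+1 <= 2 * S.
  have eS_last : S = \sum_(0 <= i < m.+1) l i + l m.+1 by rewrite /S big_nat_recr.
  have eS_first : S = l 0%N + \sum_(0 <= i < m.+1) l i.+1.
    by rewrite /S big_nat_recl.
  have := l_gt0 0%N isT; have := l_gt0 m.+1 (leqnn _); lra.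
have tangent : 3 * c ^+ 2 * m.+1%:R - 2 * S * c ^+ 3 <=
               \sum_(0 <= i < m.+1) 1 / (l i * l i.+1).
  apply: (@le_trans _ _
    (\sum_(0 <= i < m.+1) (3 * c ^+ 2 - (l i + l i.+1) * c ^+ 3))); last first.
    apply: ler_sum_nat => i /andP[_ lt_im].
    by apply: inv_mul_ge_tangent => //; apply: l_gt0; rewrite // ltnW.
  rewrite sumrB sumr_const_nat subn0 -mulr_suml big_split /= mulr_natr.
  by rewrite lerB // ler_wpM2r // exprn_ge0 // ltW.
apply: le_trans (ler_wpM2r (ltW (exprn_gt0 2 S_gt0)) tangent).
suff -> : (3 * c ^+ 2 * m.+1%:R - 2 * S * c ^+ 3) * S ^+ 2 = m.+1%:R ^+ 3 by [].
by rewrite -cS; ring.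
Qed.

End Hoelder.

Lemma le_cbrt_mul_sqr (R : realType) (x a b : R) : 0 <= x -> 0 < b ->
  x ^+ 3 <= a * b ^+ 2 -> x <= a `^ 3^-1 * b `^ (2 / 3).
Proof.
move=> x_ge0 b_gt0 le_x3.
have a_ge0 : 0 <= a.
  by rewrite -(pmulr_lge0 _ (exprn_gt0 2 b_gt0)) (le_trans _ le_x3) ?exprn_ge0.
have ea : (a `^ 3^-1) ^+ 3 = a.
  by rewrite -powR_mulrn ?powR_ge0 // -powRrM mulVf ?powRr1 // pnatr_eq0.
have eb : (b `^ (2 / 3)) ^+ 3 = b ^+ 2.
  rewrite -powR_mulrn ?powR_ge0 // -powRrM -powR_mulrn ?ltW //.
  by congr (_ `^ _); rewrite mulfVK // pnatr_eq0.
rewrite -(ler_pXn2r (_ : (0 < 3)%N)) ?nnegrE ?mulr_ge0 ?powR_ge0 //.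
by rewrite exprMn ea eb.
Qed.

Theorem lemma7p1 (R : realType) (J : nat) (F : nat -> int * int)
    (L beta : nat -> R) :
  (2 <= J)%N ->
  (forall i j : nat, (1 <= i < J)%N -> (1 <= j < J)%N -> i != j ->
     open_seg (ptR R (F i)) (ptR R (F i.+1)) `&`
     open_seg (ptR R (F j)) (ptR R (F j.+1)) = set0) ->
  (forall i : nat, (1 <= i < J)%N ->
     0 < L i /\
     ((F i.+1).1 - (F i).1)%:~R = L i * cos (beta i) /\
     ((F i.+1).2 - (F i).2)%:~R = L i * sin (beta i)) ->
  (forall i : nat, (1 <= i)%N -> (i.+1 < J)%N -> beta i < beta i.+1) ->
  beta J.-1 - beta 1 <= 2 * pi ->
  (J%:R : R) <= 2 + (beta J.-1 - beta 1) `^ (3^-1)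
                    * (\sum_(1 <= i < J) L i) `^ (2 / 3).
Proof.
move=> J_ge2 _ edge beta_incr _.
case: J J_ge2 edge beta_incr => [|[|m]] // _ edge beta_incr.
rewrite /= big_add1 /= -addn2 natrD addrC lerD2l.
have L_gt0 i : (i <= m)%N -> 0 < L i.+1.
  by move=> le_im; case: (edge i.+1); rewrite //= !ltnS.
have gap i : (i < m)%N -> 1 / (L i.+1 * L i.+2) <= beta i.+2 - beta i.+1.
  move=> lt_im.
  have [l_gt0 [edx edy]] := edge i.+1 ltac:(by rewrite /= !ltnS ltnW).
  have [l'_gt0 [edx' edy']] := edge i.+2 ltac:(by rewrite /= !ltnS).
  apply: int_polar_angle_gap l_gt0 l'_gt0 _ edx edy edx' edy'.
  by apply: beta_incr; rewrite // !ltnS.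
have turn : \sum_(0 <= i < m) 1 / (L i.+1 * L i.+2) <= beta m.+1 - beta 1.
  rewrite -(telescope_sumr (fun k => beta k.+1)) //.
  by apply: ler_sum_nat => i /andP[_ /gap].
apply: le_cbrt_mul_sqr => //.
- exact: sumr_nat_gt0.
- apply: le_trans (natr_exp3_le_sum_inv_mul L_gt0) _.
  by rewrite ler_wpM2r ?sqr_ge0.
Qed.
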